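(* Let $\mathcal{T}$ be a finite total order, $\mathcal{G}$ a finite grid poset, $S\subseteq\mathcal{T}\times\mathcal{G}$ a spread, $A=\min S$ and $B=\max S$ (so $S=\uparrow A\cap\downarrow B$). Let \[ \mathcal{Q}=\pi_0\big(\{0\}\cup A\cup(A+e_0)\cup(B+e_0)\cup(B+2e_0)\big)\times\mathcal{G}\subseteq\mathcal{T}\times\mathcal{G}, \] where $0$ is the minimum of $\mathcal{T}\times\mathcal{G}$. Then $\mathcal{Q}$ contains $\min S$ and $\operatorname{cover}S$, and, for every spread $R$ such that $\mathbb{k}_R$ is a direct summand of the domain of a minimal spread-radical approximation of $\mathbb{k}_S$, $\mathcal{Q}$ contains $\min R$ and $\operatorname{cover}R$.
   Context: Fix a field $\mathbb{k}$. Identify $\mathcal{T}=[m_0]$, $\mathcal{G}=[m_1]\times\cdots\times[m_n]$ ($[m]=\{0<\dots<m-1\}$), with product order; $\pi_0$ is projection to $\mathcal{T}$. $x+e_0$ replaces the $0$-th coordinate of $x$ by $\min(m_0-1,\pi_0(x)+1)$; $B+2e_0=(B+e_0)+e_0$; $X+e_0=\{x+e_0:x\in X\}$. $\uparrow X,\downarrow X$ are the upset and downset generated by $X$; $\operatorname{cover}X=\min(\uparrow X\setminus X)$. A spread is a nonempty convex zigzag-connected subset; $\mathbb{k}_R$ its indicator representation in $\operatorname{rep}(\mathcal{T}\times\mathcal{G})$ (functors to finite-dimensional vector spaces). In the full subcategory $\mathcal{C}$ of finite direct sums of spread representations, the radical $\operatorname{rad}_\mathcal{C}(X,Y)$ is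 the additive subfunctor of Hom consisting of non-isomorphisms between indecomposables; a minimal spread-radical approximation of $M\in\mathcal{C}$ is a right minimal morphism $\rho:C\to M$, $C\in\mathcal{C}$, such that for every $A'\in\mathcal{C}$ the image of $\operatorname{Hom}(A',C)\to\operatorname{Hom}(A',M)$ equals $\operatorname{rad}_\mathcal{C}(A',M)$. *)

From mathcomp Require Import all_boot all_algebra.
Set Implicit Arguments.
Unset Strict Implicit.
Unset Printing Implicit Defensive.
Import GRing.Theory.
Local Open Scope ring_scope.

(* Poset T x G with T = [m0] = 'I_m0 and G = [m_1] x ... x [m_n]
   encoded as dependent finite functions i : 'I_n -> 'I_(m i). *)
Section Poset.
Variables (m0 n : nat) (m : 'I_n -> nat).

Definition gridG := {dffun forall i : 'I_n, 'I_(m i)}.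
Definition pt := ('I_m0 * gridG)%type.

Definition ple (x y : pt) : bool :=
  (x.1 <= y.1)%N && [forall i, (x.2 i <= y.2 i)%N].

Definition pi0 (x : pt) : 'I_m0 := x.1.

(* capped successor in T : t |-> min(m0-1, t+1) *)
Definition succT (t : 'I_m0) : 'I_m0 := insubd t t.+1.
Definition shift0 (x : pt) : pt := (succT x.1, x.2).

Definition upset (X : {set pt}) : {set pt} :=
  [set y | [exists x in X, ple x y]].
Definition downset (X : {set pt}) : {set pt} :=
  [set y | [exists x in X, ple y x]].
Definition pmin (X : {set pt}) : {set pt} :=
  [set x in X | [forall y in X, ple y x ==> (y == x)]].
Definition pmax (X : {set pt}) : {set pt} :=
  [set x in X | [forall y in X, ple x y ==> (y == x)]].
Definition pcover (X : {set pt}) : {set pt} := pmin (upset X :\: X).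

Definition comparable (x y : pt) : bool := ple x y || ple y x.

Definition convex (X : {set pt}) : Prop :=
  forall x y z, x \in X -> z \in X -> ple x y -> ple y z -> y \in X.
Definition zigzag_connected (X : {set pt}) : Prop :=
  forall x y, x \in X -> y \in X ->
    exists p : seq pt, [/\ path comparable x p, last x p = y & all (mem X) p].
Definition spread (X : {set pt}) : Prop :=
  X != set0 /\ convex X /\ zigzag_connected X.

(* ---- representations of T x G over a field F ----
   A representation assigns F^(rdim x) to each point and a matrix
   rmap x y : 'M_(rdim x, rdim y) (row-vector convention: v |-> v *m rmap x y)
   to each relation x <= y (values for non-comparable pairs are irrelevant). *)
Variable F : fieldType.

Record rep := Rep { rdim : pt -> nat; rmap : forall x y : pt, 'M[F]_(rdim x, rdim y) }.

Definition is_rep (V : rep) : Prop :=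
  (forall x, rmap V x x = 1%:M) /\
  (forall x y z, ple x y -> ple y z -> rmap V x z = rmap V x y *m rmap V y z).

Definition rhom (V W : rep) := forall x : pt, 'M[F]_(rdim V x, rdim W x).

Definition is_hom (V W : rep) (f : rhom V W) : Prop :=
  forall x y, ple x y -> rmap V x y *m f y = f x *m rmap W x y.

(* comp f g = g o f *)
Definition comp (U V W : rep) (f : rhom U V) (g : rhom V W) : rhom U W :=
  fun x => f x *m g x.
Definition hid (V : rep) : rhom V V := fun x => 1%:M.
Definition heq (V W : rep) (f g : rhom V W) : Prop := forall x, f x = g x.

Definition is_iso (V W : rep) (f : rhom V W) : Prop :=
  is_hom f /\ exists g : rhom W V,
    [/\ is_hom g, heq (comp f g) (hid V) & heq (comp g f) (hid W)].

Definition direct_summand (V W : rep) : Prop :=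
  exists (i : rhom V W) (p : rhom W V), [/\ is_hom i, is_hom p & heq (comp i p) (hid V)].

Definition spread_rep (R : {set pt}) : rep :=
  @Rep (fun x => nat_of_bool (x \in R))
       (fun x y => if (x \in R) && (y \in R) then const_mx 1 else 0).

Definition ddim (s : seq {set pt}) (x : pt) (i : 'I_(size s)) : nat :=
  nat_of_bool (x \in nth set0 s i).

Definition dsum (s : seq {set pt}) : rep :=
  @Rep (fun x => (\sum_(i < size s) @ddim s x i)%N)
       (fun x y => mxblock (p_ := @ddim s x) (q_ := @ddim s y)
          (fun i j => if (i == j) && (x \in nth set0 s i) && (y \in nth set0 s j)
                      then const_mx 1 else 0)).

Definition incl (s : seq {set pt}) (i : 'I_(size s)) :
  rhom (spread_rep (nth set0 s i)) (dsum s) :=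
  fun x => mxrow (q_ := @ddim s x) (fun j => if i == j then const_mx 1 else 0).
Definition proj (s : seq {set pt}) (j : 'I_(size s)) :
  rhom (dsum s) (spread_rep (nth set0 s j)) :=
  fun x => mxcol (p_ := @ddim s x) (fun i => if i == j then const_mx 1 else 0).

(* the radical of the category C of finite direct sums of spread
   representations: a morphism lies in the radical iff all of its components
   between indecomposable summands are non-isomorphisms *)
Definition in_rad (s t : seq {set pt}) (f : rhom (dsum s) (dsum t)) : Prop :=
  forall (i : 'I_(size s)) (j : 'I_(size t)),
    ~ is_iso (comp (incl i) (comp f (proj j))).

Definition right_minimal (s t : seq {set pt}) (rho : rhom (dsum s) (dsum t)) : Prop :=
  forall phi : rhom (dsum s) (dsum s), is_hom phi -> heq (comp phi rho) rho -> is_iso phi.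

Definition min_spread_rad_approx (s t : seq {set pt}) (rho : rhom (dsum s) (dsum t)) : Prop :=
  [/\ (forall R, R \in s -> spread R), is_hom rho, right_minimal rho &
    forall s' : seq {set pt}, (forall R, R \in s' -> spread R) ->
      forall g : rhom (dsum s') (dsum t), is_hom g ->
        (in_rad g <-> exists h : rhom (dsum s') (dsum s), is_hom h /\ heq g (comp h rho))].

Definition Qset (S : {set pt}) : {set pt} :=
  let A := pmin S in let B := pmax S in
  let X := pmin setT :|: A :|: shift0 @: A :|: shift0 @: B :|: shift0 @: (shift0 @: B) in
  [set x : pt | x.1 \in pi0 @: X].

End Poset.

From mathcomp Require Import all_boot all_algebra.
Set Implicit Arguments.
Unset Strict Implicit.
Unset Printing Implicit Defensive.
Import GRing.Theory.

(* The summand [kR R] contributes a morphism [kR R -> kR S], that is a scalar function [c]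
   on [R :&: S].  By right minimality and the radical property, [c] is not a sum of
   morphisms through spreads other than [R] and [S], and it vanishes somewhere when [R = S].
   The connected components of the support of [c] are spreads, so one of them must be all
   of [R] (then [R] is an up-closed part of [S]) or all of [S] (then [S] is a down-closed
   part of [R]).  In both cases, if a minimal or cover point of [R] had a [T]-coordinate not
   among those defining [Q], adding the points one step lower in [T] (or cutting [R] down
   to the part below a cover point of [S]) would give a spread strictly between [R] and [S]
   through which [c] factors. *)

Section Poset.
Variables (m0 n : nat) (m : 'I_n -> nat).
Notation P := (pt m0 m).
Implicit Types (x y z : P) (X Y : {set P}).

Lemma pleP x y : reflect ((x.1 <= y.1)%N /\ forall i, (x.2 i <= y.2 i)%N) (ple x y).
Proof. by apply: (iffP andP) => -[h /forallP h2]. Qed.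

Lemma ple_refl x : ple x x.
Proof. by apply/pleP. Qed.

Lemma ple_trans x y z : ple x y -> ple y z -> ple x z.
Proof.
move=> /pleP[h1 h2] /pleP[h3 h4]; apply/pleP; split; first exact: leq_trans h3.
by move=> i; apply: leq_trans (h2 i) (h4 i).
Qed.

Lemma ple_anti x y : ple x y -> ple y x -> x = y.
Proof.
case: x y => [t g] [t' g'] /pleP[/= h1 h2] /pleP[/= h3 h4].
congr pair; first by apply/val_inj/eqP; rewrite eqn_leq h1 h3.
by apply/ffunP => i; apply/val_inj/eqP; rewrite eqn_leq h2 h4.
Qed.

Lemma ple_fst x y : ple x y -> (x.1 <= y.1)%N.
Proof. by case/pleP. Qed.

Lemma pminP X x :
  reflect (x \in X /\ forall y, y \in X -> ple y x -> y = x) (x \in pmin X).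
Proof.
rewrite inE; apply: (iffP andP) => -[xX h]; split=> //.
  by move=> y yX yx; apply/eqP; move/forall_inP/(_ y yX)/implyP: h; apply.
by apply/forall_inP => y yX; apply/implyP => /(h y yX) ->.
Qed.

Lemma pmaxP X x :
  reflect (x \in X /\ forall y, y \in X -> ple x y -> y = x) (x \in pmax X).
Proof.
rewrite inE; apply: (iffP andP) => -[xX h]; split=> //.
  by move=> y yX yx; apply/eqP; move/forall_inP/(_ y yX)/implyP: h; apply.
by apply/forall_inP => y yX; apply/implyP => /(h y yX) ->.
Qed.

Lemma pmin_mem X x : x \in pmin X -> x \in X.
Proof. by case/pminP. Qed.

Lemma pmax_mem X x : x \in pmax X -> x \in X.
Proof. by case/pmaxP. Qed.

Lemma exists_pmin X x : x \in X -> exists2 a, a \in pmin X & ple a x.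
Proof.
move=> xX; pose below := [pred y | (y \in X) && ple y x].
case: (@arg_minnP _ x below (fun y => #|[set z | ple z y]|)); first by rewrite /= xX ple_refl.
move=> a /andP[aX ax] amin; exists a => //; apply/pminP; split=> //; move=> y yX ya.
apply: (ple_anti ya); have := amin y; rewrite /= yX (ple_trans ya ax) => /(_ isT).
apply: contraTT => ay; rewrite -ltnNge; apply: proper_card; apply/properP; split.
  by apply/subsetP => z; rewrite !inE => /ple_trans; apply.
by exists a; rewrite !inE ?ple_refl ?ay.
Qed.

Lemma exists_pmax X x : x \in X -> exists2 b, b \in pmax X & ple x b.
Proof.
move=> xX; pose above := [pred y | (y \in X) && ple x y].
case: (@arg_minnP _ x above (fun y => #|[set z | ple y z]|)); first by rewrite /= xX ple_refl.
move=> b /andP[bX xb] bmin; exists b => //; apply/pmaxP; split=> //; move=> y yX yb.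
apply/esym/(ple_anti yb); have := bmin y; rewrite /= yX (ple_trans xb yb) => /(_ isT).
apply: contraTT => by_; rewrite -ltnNge; apply: proper_card; apply/properP; split.
  by apply/subsetP => z; rewrite !inE; apply: ple_trans.
by exists b; rewrite !inE ?ple_refl ?by_.
Qed.

End Poset.

Section Zigzag.
Variables (m0 n : nat) (m : 'I_n -> nat).
Notation P := (pt m0 m).
Implicit Types (x y z : P) (X Y : {set P}).

Definition zigzag_rel X : rel P := fun a b => [&& a \in X, b \in X & comparable a b].

Lemma zigzag_rel_sym X : symmetric (zigzag_rel X).
Proof. by move=> a b; rewrite /zigzag_rel /comparable orbC andbCA andbA. Qed.

Lemma zigzag_connectedP X :
  zigzag_connected X <-> forall x y, x \in X -> y \in X -> connect (zigzag_rel X) x y.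
Proof.
split=> [zz x y xX yX | h x y xX yX].
  have [p [pp lp ap]] := zz x y xX yX; apply/connectP; exists p => //.
  elim: p x xX pp ap {lp} => //= z p IH x xX /andP[cz pp] /andP[zX ap].
  by rewrite /zigzag_rel xX zX cz /= IH.
have /connectP[p pp lp] := h x y xX yX; exists p; split=> //.
- by elim: p x pp {lp xX} => //= z p IH x /andP[/and3P[_ _ ->] /IH].
- by elim: p x pp {lp xX} => //= z p IH x /andP[/and3P[_ -> _] /IH].
Qed.

Lemma connect_zigzag_sub X Y x y : {subset X <= Y} ->
  connect (zigzag_rel X) x y -> connect (zigzag_rel Y) x y.
Proof.
move=> XY; apply: connect_sub => a b /and3P[aX bX ab].
by apply: connect1; rewrite /zigzag_rel !XY.
Qed.

Lemma connect_zigzag_edge X a b : a \in X -> b \in X -> comparable a b ->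
  connect (zigzag_rel X) a b.
Proof. by move=> aX bX ab; apply: connect1; rewrite /zigzag_rel aX bX. Qed.

Lemma zigzag_connected_from X h : h \in X ->
  (forall y, y \in X -> connect (zigzag_rel X) h y) -> zigzag_connected X.
Proof.
move=> hX hy; apply/zigzag_connectedP => x y xX yX; apply: connect_trans (hy y yX).
by rewrite (sym_connect_sym (@zigzag_rel_sym X)); apply: hy.
Qed.

Lemma connect_preserves (e : rel P) (Q : pred P) a b :
  (forall x y, Q x -> e x y -> Q y) -> connect e a b -> Q a -> Q b.
Proof.
move=> hQ /connectP[p pp ->]; elim: p a pp => //= z p IH a /andP[az pp] Qa.
exact: IH pp (hQ _ _ Qa az).
Qed.

Lemma zigzag_connected_closed X Y x0 : zigzag_connected Y -> x0 \in X -> {subset X <= Y} ->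
  (forall a b, a \in X -> b \in Y -> comparable a b -> b \in X) -> {subset Y <= X}.
Proof.
move=> zY x0X XY cl y yY; have [p [pp lp ap]] := zY x0 y (XY _ x0X) yY.
elim: p x0 x0X pp lp ap => [|z p IH] x0 x0X /=; first by move=> _ <-.
by case/andP=> cz pp lp /andP[zY' ap]; apply: (IH z) => //; apply: (cl x0).
Qed.

Lemma zigzag_connected_setU (X Y : {set P}) x0 h :
  zigzag_connected X -> x0 \in X -> h \in X :|: Y -> comparable x0 h ->
  (forall y, y \in Y -> comparable h y) -> zigzag_connected (X :|: Y).
Proof.
move=> zX x0X hXY x0h hY; have x0XY : x0 \in X :|: Y by rewrite inE x0X.
apply: (zigzag_connected_from x0XY) => w; case/setUP => [wX|wY].
  apply: (connect_zigzag_sub (X := X)) => [z zinX|]; first by rewrite inE zinX.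
  exact: (zigzag_connectedP X).1.
apply: (connect_trans (connect_zigzag_edge x0XY hXY x0h)).
by apply: connect_zigzag_edge (hXY) _ (hY w wY); rewrite inE wY orbT.
Qed.

End Zigzag.

Section TShift.
Variables (m0 n : nat) (m : 'I_n -> nat).
Notation P := (pt m0 m).
Implicit Types (x y b : P).

(* [x - e_0], truncated: [unshift0 x = x] when [x.1 = 0]. *)
Definition unshift0 x : P := (Ordinal (leq_ltn_trans (leq_subr 1 x.1) (ltn_ord x.1)), x.2).

Lemma unshift0_ple x : ple (unshift0 x) x.
Proof. by apply/pleP; split=> //=; apply: leq_subr. Qed.

Lemma unshift0_succ x : (0 < x.1)%N -> (unshift0 x).1.+1 = x.1 :> nat.
Proof. by move=> x0; rewrite /= subn1 prednK. Qed.

Lemma unshift0_neq x : (0 < x.1)%N -> unshift0 x != x.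
Proof.
move=> x0; apply/eqP => /(congr1 (fun z : P => nat_of_ord z.1)).
by rewrite -[in RHS](unshift0_succ x0) => /n_Sn.
Qed.

Lemma ple_unshift0 y x : ple y x -> (y.1 < x.1)%N -> ple y (unshift0 x).
Proof.
move=> /pleP[_ h2] lt; apply/pleP; split=> //=.
by rewrite leq_subRL ?add1n // (leq_ltn_trans _ lt).
Qed.

Lemma unshift0_ple_up x b : ple (unshift0 x) b -> (x.1 <= b.1)%N -> ple x b.
Proof. by move=> /pleP[_ h2] h; apply/pleP. Qed.

Lemma succT_val (t : 'I_m0) : (t.+1 < m0)%N -> val (succT t) = t.+1.
Proof. by move=> h; rewrite /succT val_insubd h. Qed.

End TShift.

Section BoolMatrices.
Local Open Scope ring_scope.
Variable F : fieldType.

Definition mxsum (a b : nat) (M : 'M[F]_(a, b)) : F := \sum_i \sum_j M i j.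

Lemma mxsum0 (a b : nat) : mxsum (0 : 'M[F]_(a, b)) = 0.
Proof. by rewrite /mxsum big1 // => i _; rewrite big1 // => j _; rewrite mxE. Qed.

Lemma mxsumD (a b : nat) (A B : 'M[F]_(a, b)) : mxsum (A + B) = mxsum A + mxsum B.
Proof.
rewrite /mxsum -big_split; apply: eq_bigr => i _.
by rewrite -big_split; apply: eq_bigr => j _; rewrite mxE.
Qed.

Lemma mxsum_sum (a b : nat) I (r : seq I) (P : pred I) (A : I -> 'M[F]_(a, b)) :
  mxsum (\sum_(i <- r | P i) A i) = \sum_(i <- r | P i) mxsum (A i).
Proof. by elim/big_rec2: _ => [|i y1 y2 _ <-]; rewrite ?mxsum0 ?mxsumD. Qed.

Lemma mxsum1 (k : nat) : mxsum (1%:M : 'M[F]_k) = k%:R.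
Proof.
rewrite /mxsum (eq_bigr (fun _ => 1)) ?sumr_const ?card_ord // => i _.
rewrite (bigD1 i) //= big1 ?addr0 ?mxE ?eqxx // => j /negPf ji.
by rewrite mxE eq_sym ji.
Qed.

Lemma mxsum_out (a b : bool) (M : 'M[F]_(a, b)) : ~~ (a && b) -> mxsum M = 0.
Proof.
case: a M => M; last by rewrite /mxsum big_ord0.
by case: b M => M // _; rewrite /mxsum big1 // => i; rewrite big_ord0.
Qed.

Lemma mxsum_const (a b : bool) (x : F) :
  mxsum (const_mx x : 'M[F]_(a, b)) = if a && b then x else 0.
Proof.
case: ifP => [/andP[-> ->]|/negbT]; last exact: mxsum_out.
by rewrite /mxsum !big_ord1 mxE.
Qed.

Lemma bool_mx_const (a b : bool) (M : 'M[F]_(a, b)) : M = const_mx (mxsum M).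
Proof.
case: a M; case: b => M; try by rewrite [LHS]flatmx0 [RHS]flatmx0.
- by apply/matrixP => i j; rewrite !mxE /mxsum !big_ord1 [i]ord1 [j]ord1.
- by rewrite [LHS]thinmx0 [RHS]thinmx0.
Qed.

Lemma mxsum_inj (a b : bool) : injective (@mxsum a b).
Proof. by move=> A B e; rewrite (bool_mx_const A) (bool_mx_const B) e. Qed.

Lemma mxsum_mul (a b c : bool) (A : 'M[F]_(a, b)) (B : 'M[F]_(b, c)) :
  mxsum (A *m B) = if b then mxsum A * mxsum B else 0.
Proof.
case: b A B => A B; last by rewrite [A]thinmx0 mul0mx mxsum0.
by case: a A => A; case: c B => B;
  rewrite /mxsum ?big_ord0 ?big_ord1 ?mxE ?big_ord0 ?big_ord1 ?mulr0 ?mul0r.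
Qed.

Lemma const1_id (b : bool) : (const_mx 1 : 'M[F]_(b, b)) = 1%:M.
Proof. by apply: mxsum_inj; rewrite mxsum_const mxsum1; case: b. Qed.

End BoolMatrices.

Section SpreadHoms.
Local Open Scope ring_scope.
Variables (m0 n : nat) (m : 'I_n -> nat) (F : fieldType).
Notation P := (pt m0 m).
Notation kR := (spread_rep F).

(* A family of scalars [c x], read at the points of [X :&: Y], defines a
   morphism [kR X -> kR Y] exactly under these three naturality conditions. *)
Definition admissible (X Y : {set P}) (c : P -> F) : Prop := forall x y, ple x y ->
  [/\ x \in X -> x \in Y -> y \in X -> y \in Y -> c x = c y,
      x \in X -> x \in Y -> y \in Y -> y \notin X -> c x = 0 &
      x \in X -> x \notin Y -> y \in X -> y \in Y -> c y = 0].

Definition coef (X Y : {set P}) (f : rhom (kR X) (kR Y)) (x : P) : F := mxsum (f x).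

Definition coef_hom (X Y : {set P}) (c : P -> F) : rhom (kR X) (kR Y) :=
  fun x => const_mx (c x).

Lemma mxsum_rmap (X : {set P}) x y :
  mxsum (rmap (kR X) x y) = ((x \in X) && (y \in X))%:R.
Proof. by rewrite /=; case: ifP => h; rewrite ?mxsum0 // mxsum_const h. Qed.

Lemma coef_out (X Y : {set P}) (f : rhom (kR X) (kR Y)) x :
  ~~ ((x \in X) && (x \in Y)) -> coef f x = 0.
Proof. exact: mxsum_out. Qed.

Lemma coef_admissible (X Y : {set P}) (f : rhom (kR X) (kR Y)) :
  is_hom f -> admissible X Y (coef f).
Proof.
move=> hf x y xy; have := congr1 (@mxsum F _ _) (hf x y xy).
rewrite !mxsum_mul !mxsum_rmap -/(coef f x) -/(coef f y).
have hx := @coef_out X Y f x; have hy := @coef_out X Y f y.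
move: (coef f x) (coef f y) hx hy => cx cy.
by case: (x \in X); case: (x \in Y); case: (y \in X); case: (y \in Y);
  rewrite /= ?mul1r ?mulr1 ?mul0r ?mulr0 => hx hy E; split => //; rewrite ?hx ?hy.
Qed.

Lemma coef_of_hom (X Y : {set P}) (c : P -> F) x :
  coef (coef_hom X Y c) x = if (x \in X) && (x \in Y) then c x else 0.
Proof. exact: mxsum_const. Qed.

Lemma coef_hom_is_hom (X Y : {set P}) (c : P -> F) :
  admissible X Y c -> is_hom (coef_hom X Y c).
Proof.
move=> hc x y xy; apply: mxsum_inj; rewrite !mxsum_mul !mxsum_rmap.
rewrite -/(coef (coef_hom X Y c) x) -/(coef (coef_hom X Y c) y) !coef_of_hom.
have [h1 h2 h3] := hc x y xy.
case xX: (x \in X); case xY: (x \in Y); case yX: (y \in X); case yY: (y \in Y);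
  rewrite /= ?mul1r ?mulr1 ?mul0r ?mulr0 //.
- by rewrite h1.
- by rewrite h2 // yX.
- by rewrite h3 // xY.
Qed.

Lemma hom_comp (U V W : rep m0 m F) (f : rhom U V) (g : rhom V W) :
  is_hom f -> is_hom g -> is_hom (comp f g).
Proof. by move=> hf hg x y xy; rewrite /comp mulmxA hf // -!mulmxA hg. Qed.

Lemma hom_id (V : rep m0 m F) : is_hom (hid V).
Proof. by move=> x y xy; rewrite /hid mulmx1 mul1mx. Qed.

Lemma hom_sub (V W : rep m0 m F) (f g : rhom V W) :
  is_hom f -> is_hom g -> is_hom (fun x => f x - g x : 'M_(_, _)).
Proof. by move=> hf hg x y xy; rewrite mulmxBr mulmxBl hf // hg. Qed.

Lemma hom_sum (V W : rep m0 m F) (I : Type) (r : seq I) (f : I -> rhom V W) :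
  (forall i, is_hom (f i)) -> is_hom (fun x => \sum_(i <- r) f i x : 'M_(_, _)).
Proof.
move=> hf x y xy; rewrite mulmx_sumr mulmx_suml.
by apply: eq_bigr => i _; rewrite hf.
Qed.

End SpreadHoms.

Section DirectSums.
Local Open Scope ring_scope.
Variables (m0 n : nat) (m : 'I_n -> nat) (F : fieldType) (s : seq {set pt m0 m}).

Lemma mxblock_diag1 (p : nat) (p_ : 'I_p -> nat) : (forall i, p_ i <= 1)%N ->
  mxblock (p_ := p_) (q_ := p_)
    (fun i l => if i == l then const_mx 1 else 0 : 'M[F]_(p_ i, p_ l)) = 1%:M.
Proof.
move=> p_le1; apply/matrixP => u v; rewrite !mxE; case: eqP => e; rewrite mxE; last first.
  by case: eqP => // uv; case: e; rewrite uv.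
suff -> : u == v by [].
have sig2_0 (w : 'I_(\sum_i p_ i)) : nat_of_ord (order.tagnat.sig2 w) = 0%N.
  have := ltn_ord (order.tagnat.sig2 w); have := p_le1 (order.tagnat.sig1 w).
  by case: (p_ _) (order.tagnat.sig2 w) => [|[|]] // [[|]].
by apply/eqP/val_inj; rewrite /= (order.tagnat.rect u) (order.tagnat.rect v) !sig2_0 e.
Qed.

Lemma incl_proj (j k : 'I_(size s)) x :
  incl F j x *m proj F k x = if j == k then const_mx 1 else 0.
Proof.
rewrite /incl /proj mul_mxrow_mxcol (bigD1 j) //= big1 ?addr0; last first.
  by move=> i ij; rewrite eq_sym (negPf ij) mul0mx.
rewrite eqxx; case: eqP => [<-|_]; last by rewrite mulmx0.
by apply: mxsum_inj; rewrite mxsum_mul !mxsum_const; case: (x \in _); rewrite ?mulr1.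
Qed.

Lemma incl_projE (j : 'I_(size s)) x : incl F j x *m proj F j x = 1%:M.
Proof. by rewrite incl_proj eqxx const1_id. Qed.

Lemma sum_proj_incl x : \sum_(k < size s) proj F k x *m incl F k x = 1%:M.
Proof.
rewrite /proj /incl; under eq_bigr do rewrite mul_mxcol_mxrow.
rewrite -mxblock_sum -[RHS](@mxblock_diag1 _ (@ddim _ _ _ s x)); last first.
  by move=> i; rewrite /ddim; case: (_ \in _).
apply: eq_mxblock => i l.
rewrite (bigD1 i) //= big1 ?addr0; last first.
  by move=> k ki; rewrite eq_sym (negPf ki) mul0mx.
rewrite eqxx; case: eqP => [<-|_]; last by rewrite mulmx0.
by apply: mxsum_inj; rewrite mxsum_mul !mxsum_const; case: (x \in _); rewrite ?mulr1.
Qed.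

Lemma incl_hom (j : 'I_(size s)) : is_hom (incl F j).
Proof.
move=> x y xy; rewrite /incl mul_mxrow /= mul_mxrow_mxblock; apply: eq_mxrow => l.
rewrite (bigD1 j) //= big1 ?addr0; last first.
  by move=> k kj; rewrite eq_sym (negPf kj) mul0mx.
apply: mxsum_inj; rewrite !mxsum_mul !(fun_if (@mxsum F _ _)) !mxsum_const ?mxsum0 eqxx.
rewrite !if_same; case: eqP => [<-|_]; rewrite /= ?andbF ?andFb ?mulr0 ?mul0r ?if_same //.
by case: (x \in _); case: (y \in _); rewrite /= ?mulr1 ?mul1r ?mulr0 ?mul0r.
Qed.

Lemma proj_hom (j : 'I_(size s)) : is_hom (proj F j).
Proof.
move=> x y xy; rewrite /proj mxcol_mul /= mul_mxblock_mxrow; apply: eq_mxcol => l.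
rewrite (bigD1 j) //= big1 ?addr0; last first.
  by move=> k kj; rewrite (negPf kj) mulmx0.
apply: mxsum_inj; rewrite !mxsum_mul !(fun_if (@mxsum F _ _)) !mxsum_const ?mxsum0 eqxx.
rewrite !if_same; case: eqP => [->|_]; rewrite /= ?andbF ?andFb ?mulr0 ?mul0r ?if_same //.
by case: (x \in _); case: (y \in _); rewrite /= ?mulr1 ?mul1r ?mulr0 ?mul0r.
Qed.

End DirectSums.

Section SpreadMorphisms.
Local Open Scope ring_scope.
Variables (m0 n : nat) (m : 'I_n -> nat) (F : fieldType).
Notation P := (pt m0 m).
Notation kR := (spread_rep F).

Lemma proj_incl_single (S : {set P}) x :
  proj F (ord0 : 'I_(size [:: S])) x *m incl F (ord0 : 'I_(size [:: S])) x = 1%:M.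
Proof. by have := sum_proj_incl F [:: S] x; rewrite big_ord1. Qed.

Lemma iso_spread_eq (X Y : {set P}) (f : rhom (kR X) (kR Y)) : is_iso f -> X = Y.
Proof.
case=> _ [g [_ e1 e2]]; apply/setP => x.
have := congr1 (@mxsum F _ _) (e1 x); rewrite /comp /hid mxsum_mul mxsum1 /=.
have := congr1 (@mxsum F _ _) (e2 x); rewrite /comp /hid mxsum_mul mxsum1 /=.
move: (mxsum (f x)) (mxsum (g x)) => a b.
by case: (x \in X); case: (x \in Y) => //=; [move=> _ /esym/eqP | move/esym/eqP]; rewrite oner_eq0.
Qed.

(* The coefficient of the round trip is constant on the connected set [X]; if it is nonzero, it
   forces [X] and [Y] to agree. *)
Lemma spread_round_trip0 (X Y : {set P}) (a : rhom (kR X) (kR Y)) (b : rhom (kR Y) (kR X)) :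
  spread X -> spread Y -> X != Y -> is_hom a -> is_hom b -> forall x, a x *m b x = 0.
Proof.
move=> [_ [_ zX]] [_ [_ zY]] XY ha hb.
have hab := coef_admissible (hom_comp ha hb).
have ha' := coef_admissible ha; have hb' := coef_admissible hb.
suff nz x1 : x1 \in X -> coef (comp a b) x1 != 0 -> False.
  move=> x; apply: mxsum_inj; rewrite mxsum0; case/orP: (orbN (x \in X)) => xX.
    by apply/eqP/negPn/negP => /(nz x xX).
  by apply: mxsum_out; rewrite (negPf xX).
move=> x1X nz1; pose Z := [set x in X | coef (comp a b) x == coef (comp a b) x1].
have XZ : {subset X <= Z}.
  apply: (zigzag_connected_closed zX (x0 := x1)); first by rewrite inE x1X eqxx.
    by move=> z; rewrite inE => /andP[].
  move=> u w; rewrite inE => /andP[uX /eqP eu] wX /orP[] uw; rewrite inE wX /=.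
  + by have [h1 _ _] := hab u w uw; rewrite -(h1 uX uX wX wX) eu.
  + by have [h1 _ _] := hab w u uw; rewrite (h1 wX wX uX uX) eu.
have nzX x : x \in X -> [/\ x \in Y, coef a x != 0 & coef b x != 0].
  move=> xX; have := XZ x xX; rewrite inE xX /= => /eqP ex.
  move: nz1; rewrite -ex /coef /comp mxsum_mul -/(coef a x) -/(coef b x).
  case: (x \in Y) => //=; last by rewrite eqxx.
  by rewrite mulf_eq0 negb_or => /andP[].
have YX : {subset Y <= X}.
  apply: (zigzag_connected_closed zY (x0 := x1)) => // [x /nzX[]//|u w uX wY cuw].
  apply/negPn/negP => wX; have [uY nau nbu] := nzX u uX.
  case/orP: cuw => uw.
  + by have [_ h2 _] := ha' u w uw; rewrite (h2 uX uY wY wX) eqxx in nau.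
  + by have [_ _ h3] := hb' w u uw; rewrite (h3 wY wX uY uX) eqxx in nbu.
move/negP: XY; apply; apply/eqP/setP => x.
by apply/idP/idP => [/nzX[]|/YX].
Qed.

Lemma direct_summand_mem (R : {set P}) (s : seq {set P}) :
  spread R -> (forall R', R' \in s -> spread R') ->
  direct_summand (kR R) (dsum F s) -> exists j : 'I_(size s), nth set0 s j = R.
Proof.
move=> sR sp [i [p [hi hp e]]].
have [x xR] : exists x, x \in R by case: sR => /set0Pn.
have : \sum_(k < size s) comp i (proj F k) x *m comp (incl F k) p x = comp i p x.
  rewrite /comp -[i x in RHS]mulmx1 -(sum_proj_incl F s x) mulmx_sumr mulmx_suml.
  by apply: eq_bigr => k _; rewrite !mulmxA.
rewrite (e x) /hid.
have [k nz|all0] := pickP (fun k => comp i (proj F k) x *m comp (incl F k) p x != 0); last first.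
  rewrite big1 => [/(congr1 (@mxsum F _ _))|k _]; last by apply/eqP/negbFE/all0.
  by rewrite mxsum0 mxsum1 /= xR => /esym/eqP; rewrite oner_eq0.
exists k; apply/eqP; apply: contraLR nz => ne; apply/negPn/eqP.
have sk : spread (nth set0 s k) := sp _ (mem_nth set0 (ltn_ord k)).
apply: (spread_round_trip0 sR sk _ (hom_comp hi (proj_hom F k)) (hom_comp (incl_hom F k) hp)).
by rewrite eq_sym.
Qed.

End SpreadMorphisms.

Section RightMinimal.
Local Open Scope ring_scope.
Variables (m0 n : nat) (m : 'I_n -> nat) (F : fieldType).
Notation P := (pt m0 m).
Notation kR := (spread_rep F).

(* Otherwise [1 - proj_j (incl_j - H)] is an endomorphism fixing [rho] which kills the nonzero
   map [incl_j - H], so it is not invertible. *)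
Lemma right_minimal_incl (s t : seq {set P}) (rho : rhom (dsum F s) (dsum F t))
    (j : 'I_(size s)) (H : rhom (kR (nth set0 s j)) (dsum F s)) :
  right_minimal rho -> is_hom H -> nth set0 s j != set0 ->
  (forall x, H x *m proj F j x = 0) -> ~ (forall x, incl F j x *m rho x = H x *m rho x).
Proof.
move=> rmin hH /set0Pn[x xR] Hj eH.
pose w : rhom (kR (nth set0 s j)) (dsum F s) := fun x => incl F j x - H x.
have wj y : w y *m proj F j y = 1%:M by rewrite mulmxBl Hj subr0 incl_projE.
pose phi : rhom (dsum F s) (dsum F s) := fun y => 1%:M - proj F j y *m w y.
have hphi : is_hom phi.
  exact: hom_sub (hom_id _) (hom_comp (proj_hom F j) (hom_sub (incl_hom F j) hH)).
have [_ [g [_ phig _]]] : is_iso phi.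
  apply: (rmin phi hphi) => y; rewrite /comp mulmxBl mul1mx -mulmxA mulmxBl eH subrr.
  by rewrite mulmx0 subr0.
have w0 : w x = 0.
  have := phig x; rewrite /comp /hid => e1.
  by rewrite -[w x]mulmx1 -e1 mulmxA mulmxBr mulmx1 mulmxA wj mul1mx subrr mul0mx.
have := congr1 (fun M => mxsum (M *m proj F j x)) w0.
by rewrite /= wj mul0mx mxsum0 mxsum1 /ddim /= xR => /eqP; rewrite oner_eq0.
Qed.

End RightMinimal.

Section Factorization.
Local Open Scope ring_scope.
Variables (m0 n : nat) (m : 'I_n -> nat) (F : fieldType).
Notation P := (pt m0 m).
Notation kR := (spread_rep F).
Variables (R S : {set P}) (s' : seq {set P}) (u v : nat -> P -> F).
Notation i0 := (ord0 : 'I_(size [:: S])).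

Definition to_dsum : rhom (kR R) (dsum F s') :=
  fun x => \sum_(k < size s') coef_hom R (nth set0 s' k) (u k) x *m incl F k x.

Definition of_dsum : rhom (dsum F s') (dsum F [:: S]) :=
  fun x => \sum_(k < size s') proj F k x *m coef_hom (nth set0 s' k) S (v k) x *m incl F i0 x.

Hypothesis u_adm : forall k, (k < size s')%N -> admissible R (nth set0 s' k) (u k).
Hypothesis v_adm : forall k, (k < size s')%N -> admissible (nth set0 s' k) S (v k).

Lemma to_dsum_hom : is_hom to_dsum.
Proof.
apply: hom_sum => k; apply: hom_comp (incl_hom F k).
exact/coef_hom_is_hom/u_adm.
Qed.

Lemma of_dsum_hom : is_hom of_dsum.
Proof.
apply: hom_sum => k; apply: hom_comp (incl_hom F i0).
exact/(hom_comp (proj_hom F k))/coef_hom_is_hom/v_adm.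
Qed.

Lemma of_dsum_rad : (forall k, (k < size s')%N -> nth set0 s' k != S) -> in_rad of_dsum.
Proof.
move=> neS k j /iso_spread_eq; rewrite (ord1 j) /= => e.
by have /eqP := neS k (ltn_ord k).
Qed.

Lemma incl_of_dsum (k : 'I_(size s')) x :
  incl F k x *m of_dsum x = coef_hom (nth set0 s' k) S (v k) x *m incl F i0 x.
Proof.
rewrite /of_dsum mulmx_sumr (bigD1 k) //= [X in _ + X]big1 ?addr0 => [|l lk].
  by rewrite !mulmxA incl_projE mul1mx.
by rewrite !mulmxA incl_proj eq_sym (negPf lk) !mul0mx.
Qed.

Lemma mxsum_to_of_dsum x :
  mxsum (to_dsum x *m of_dsum x *m proj F i0 x) =
  if (x \in R) && (x \in S) then \sum_(k < size s' | x \in nth set0 s' k) u k x * v k x else 0.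
Proof.
rewrite /to_dsum !mulmx_suml mxsum_sum.
under eq_bigr => k _.
  rewrite -(mulmxA _ (incl F k x)) incl_of_dsum !mulmxA.
  rewrite -(mulmxA _ (incl F i0 x)) incl_projE mulmx1.
  rewrite mxsum_mul !mxsum_const.
over.
case: (x \in R); case: (x \in S) => /=;
  [rewrite [RHS]big_mkcond; apply: eq_bigr | apply: big1 ..] => k _;
  by case: (x \in nth set0 s' k); rewrite /= ?mulr0 ?mul0r.
Qed.

Lemma to_dsum_round_trip0 (g : rhom (dsum F s') (kR R)) :
  spread R -> (forall k, (k < size s')%N -> spread (nth set0 s' k) /\ nth set0 s' k != R) ->
  is_hom g -> forall x, to_dsum x *m g x = 0.
Proof.
move=> sR hs' hg x; rewrite /to_dsum mulmx_suml big1 // => k _.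
have [sk kR] := hs' k (ltn_ord k); rewrite -mulmxA.
apply: (spread_round_trip0 sR sk _ (coef_hom_is_hom (u_adm (ltn_ord k)))
  (hom_comp (incl_hom F k) hg)).
by rewrite eq_sym.
Qed.

End Factorization.

Section Approximation.
Local Open Scope ring_scope.
Variables (m0 n : nat) (m : 'I_n -> nat) (F : fieldType).
Notation P := (pt m0 m).
Notation kR := (spread_rep F).

(* [c] is not the coefficient of a sum of morphisms [kR R -> kR R' -> kR S] through spreads
   [R'] distinct from [R] and [S]. *)
Definition nonfactorizable (R S : {set P}) (c : P -> F) : Prop :=
  forall (s' : seq {set P}) (u v : nat -> P -> F),
  (forall k, (k < size s')%N ->
     [/\ spread (nth set0 s' k), nth set0 s' k != R, nth set0 s' k != S,
         admissible R (nth set0 s' k) (u k) & admissible (nth set0 s' k) S (v k)]) ->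
  ~ (forall x, x \in R -> x \in S ->
       c x = \sum_(k < size s' | x \in nth set0 s' k) u k x * v k x).

Variables (s : seq {set P}) (S : {set P}) (rho : rhom (dsum F s) (dsum F [:: S])).
Notation i0 := (ord0 : 'I_(size [:: S])).

Definition component (j : 'I_(size s)) : rhom (kR (nth set0 s j)) (kR S) :=
  comp (incl F j) (comp rho (proj F i0)).

Lemma component_hom j : is_hom rho -> is_hom (component j).
Proof. by move=> hrho; apply/(hom_comp (incl_hom F j))/(hom_comp hrho)/(proj_hom F i0). Qed.

Lemma component_nonfactorizable : min_spread_rad_approx rho ->
  forall j : 'I_(size s), nonfactorizable (nth set0 s j) S (coef (component j)).
Proof.
move=> [sp hrho rmin appr] j s' u v hk hc; set R := nth set0 s j.
have sR : spread R := sp _ (mem_nth set0 (ltn_ord j)).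
have u_adm k : (k < size s')%N -> admissible R (nth set0 s' k) (u k) by case/hk.
have v_adm k : (k < size s')%N -> admissible (nth set0 s' k) S (v k) by case/hk.
have sps' R' : R' \in s' -> spread R' by case/(nthP set0) => k /hk[? _ _ _ _] <-.
have [h [hh eh]] := (appr s' sps' _ (of_dsum_hom v_adm)).1
  (of_dsum_rad (fun k kl => let: And5 _ _ ne _ _ := hk k kl in ne)).
apply: (right_minimal_incl rmin (hom_comp (to_dsum_hom u_adm) hh)); first by case: sR.
  move=> x; rewrite /comp -mulmxA.
  by apply: (to_dsum_round_trip0 u_adm sR _ (hom_comp hh (proj_hom F j))) => k /hk[].
move=> x; rewrite -[LHS]mulmx1 -[RHS]mulmx1 -(proj_incl_single F S x) !mulmxA; congr (_ *m _).
rewrite /comp -(mulmxA (to_dsum _ _ _ x)) -[h x *m rho x]/(comp h rho x) -(eh x).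
apply: mxsum_inj; rewrite mxsum_to_of_dsum -mulmxA -[mxsum _]/(coef (component j) x).
case: ifP => [/andP[xR xS]|xRS]; first exact: hc.
by apply: coef_out; rewrite xRS.
Qed.

Lemma component_self_vanishes : min_spread_rad_approx rho ->
  forall j : 'I_(size s), nth set0 s j = S -> exists2 x, x \in S & coef (component j) x = 0.
Proof.
move=> [sp hrho _ appr] j eRS.
have rad_rho : in_rad rho.
  apply: (appr s sp rho hrho).2; exists (hid _); split; first exact: hom_id.
  by move=> x; rewrite /comp mul1mx.
have [x /andP[xS /eqP cx0]|nz] := pickP [pred x | (x \in S) && (coef (component j) x == 0)].
  by exists x.
exfalso; apply: (rad_rho j i0); split; first exact: component_hom.
have adm := coef_admissible (component_hom j hrho).
exists (coef_hom S (nth set0 s j) (fun x => (coef (component j) x)^-1)); split.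
- apply: coef_hom_is_hom => x y xy; have [h1 h2 h3] := adm x y xy; split.
  + by move=> xS _ yS _; rewrite (h1 _ xS _ yS) // eRS.
  + by move=> _ _ yR /negP[]; rewrite -eRS.
  + by move=> xS /negP[]; rewrite eRS.
- move=> x; apply: mxsum_inj; rewrite /comp /hid mxsum_mul mxsum1.
  rewrite -/(coef (component j) x) mxsum_const; have /= := nz x.
  move: (coef (component j) x) => c /=; rewrite eRS.
  by case: (x \in S) => //= /negbT c0; rewrite mulfV.
- move=> x; apply: mxsum_inj; rewrite /comp /hid mxsum_mul mxsum1.
  rewrite -/(coef (component j) x) mxsum_const; have /= := nz x.
  move: (coef (component j) x) => c /=; rewrite eRS.
  by case: (x \in S) => //= /negbT c0; rewrite mulVf.
Qed.

End Approximation.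

Section Closure.
Variables (m0 n : nat) (m : 'I_n -> nat).
Notation P := (pt m0 m).
Implicit Types (U X Y : {set P}).

Definition upclosed_in U Y := forall x y, x \in U -> y \in Y -> ple x y -> y \in U.
Definition downclosed_in U X := forall x y, y \in U -> x \in X -> ple x y -> x \in U.

Lemma upclosed_in_refl X : upclosed_in X X.
Proof. by move=> x y _ ->. Qed.

Lemma downclosed_in_refl X : downclosed_in X X.
Proof. by move=> x y _ ->. Qed.

Definition zcomponent X (y : P) : {set P} := [set z | connect (zigzag_rel X) y z].

Lemma zcomponent_refl X y : y \in zcomponent X y.
Proof. by rewrite inE connect0. Qed.

Lemma zcomponent_sub X y : y \in X -> {subset zcomponent X y <= X}.
Proof.
move=> yX z; rewrite inE => /connect_preserves; apply=> // a b _.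
by case/and3P.
Qed.

Lemma zcomponent_grow X y z w : y \in X -> z \in zcomponent X y -> w \in X ->
  comparable z w -> w \in zcomponent X y.
Proof.
move=> yX zC wX zw; have zX := zcomponent_sub yX zC.
by move: zC; rewrite !inE => /connect_trans; apply; apply: connect_zigzag_edge.
Qed.

Lemma zcomponent_eq X y z : z \in zcomponent X y -> zcomponent X z = zcomponent X y.
Proof.
rewrite inE => yz; apply/setP => w; rewrite !inE; apply/idP/idP; first exact: connect_trans.
by apply: connect_trans; rewrite (sym_connect_sym (@zigzag_rel_sym _ _ _ X)).
Qed.

Lemma zcomponent_spread X y : convex X -> y \in X -> spread (zcomponent X y).
Proof.
move=> cvX yX; split; first by apply/set0Pn; exists y; apply: zcomponent_refl.
have CX := zcomponent_sub yX; split.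
  move=> a z b aC bC az zb.
  by apply: (zcomponent_grow yX aC (cvX _ _ _ (CX _ aC) (CX _ bC) az zb)); rewrite /comparable az.
apply: (zigzag_connected_from (zcomponent_refl X y)) => z; rewrite inE => yz.
pose Q w := connect (zigzag_rel (zcomponent X y)) y w && (w \in zcomponent X y).
suff /andP[] : Q z by [].
apply: (connect_preserves (Q := Q) _ yz); last by rewrite /Q connect0 zcomponent_refl.
move=> a b /andP[ya aC] /and3P[_ bX ab]; have bC := zcomponent_grow yX aC bX ab.
by rewrite /Q bC andbT (connect_trans ya) // connect_zigzag_edge.
Qed.

End Closure.

Section ConstantFactorization.
Local Open Scope ring_scope.
Variables (m0 n : nat) (m : 'I_n -> nat) (F : fieldType).
Notation P := (pt m0 m).
Implicit Types (R S X Y : {set P}) (c : P -> F).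

Lemma admissible_const X Y (a : F) :
  upclosed_in (X :&: Y) Y -> downclosed_in (X :&: Y) X -> admissible X Y (fun _ => a).
Proof.
move=> up dn x y xy; split=> //.
  move=> xX xY yY /negP[]; have xXY : x \in X :&: Y by rewrite inE xX xY.
  by case/setIP: (up x y xXY yY xy).
move=> xX /negP xY yX yY; have yXY : y \in X :&: Y by rewrite inE yX yY.
by case: xY; case/setIP: (dn x y yXY xX xy).
Qed.

Lemma nonfactorizable_const R S c R' (lam : F) : nonfactorizable R S c ->
  spread R' -> R' != R -> R' != S ->
  upclosed_in (R :&: R') R' -> downclosed_in (R :&: R') R ->
  upclosed_in (R' :&: S) S -> downclosed_in (R' :&: S) R' ->
  (forall x, x \in R -> x \in S -> x \in R' /\ c x = lam) -> False.
Proof.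
move=> hNF sR' neR neS u1 d1 u2 d2 hc.
apply: (hNF [:: R'] (fun _ _ => 1) (fun _ _ => lam)).
  by case=> // _; split=> //; apply: admissible_const.
move=> x xR xS; have [xR' ->] := hc x xR xS.
by rewrite big_mkcond big_ord1 /= xR' mul1r.
Qed.

Section Admissible.
Variables (R S : {set P}) (c : P -> F).
Hypothesis adm : admissible R S c.

Lemma admissible_comparable x y : x \in R :&: S -> y \in R :&: S -> comparable x y -> c x = c y.
Proof.
move=> /setIP[xR xS] /setIP[yR yS] /orP[] xy.
  by have [h _ _] := adm xy; apply: h.
by have [h _ _] := adm xy; symmetry; apply: h.
Qed.

Lemma admissible_up x y : x \in R :&: S -> c x != 0 -> y \in S -> ple x y -> y \in R.
Proof.
move=> /setIP[xR xS] cx yS xy; apply/negPn/negP => yR.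
by have [_ h _] := adm xy; rewrite (h xR xS yS yR) eqxx in cx.
Qed.

Lemma admissible_down x y : y \in R :&: S -> c y != 0 -> x \in R -> ple x y -> x \in S.
Proof.
move=> /setIP[yR yS] cy xR xy; apply/negPn/negP => xS.
by have [_ _ h] := adm xy; rewrite (h xR xS yR yS) eqxx in cy.
Qed.

Lemma admissible_zcomponent y z : y \in R :&: S -> z \in zcomponent (R :&: S) y -> c z = c y.
Proof.
move=> yD; rewrite inE => yz.
pose Q w := (w \in R :&: S) && (c w == c y).
suff /andP[_ /eqP] : Q z by [].
apply: (connect_preserves (Q := Q) _ yz); last by rewrite /Q yD eqxx.
move=> a b; rewrite /Q => /andP[aD /eqP <-] /and3P[_ bD ab].
by rewrite bD (admissible_comparable bD aD) ?eqxx // /comparable orbC.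
Qed.

Lemma convex_setI : convex R -> convex S -> convex (R :&: S).
Proof.
move=> cvR cvS x y z /setIP[xR xS] /setIP[zR zS] xy yz.
by rewrite inE (cvR x y z) ?(cvS x y z).
Qed.

Lemma zcomponent_admissible_in y : y \in R :&: S -> c y != 0 ->
  admissible R (zcomponent (R :&: S) y) (fun _ => 1 : F).
Proof.
move=> yD cy; have CD := zcomponent_sub yD.
apply: admissible_const => [x z /setIP[_ xC] zC _ | x z /setIP[zR zC] xR xz].
  by rewrite inE zC; case/setIP: (CD _ zC) => ->.
have zD := CD _ zC; have cz : c z != 0 by rewrite (admissible_zcomponent yD zC).
have xD : x \in R :&: S by rewrite inE xR (admissible_down zD cz xR xz).
by rewrite inE xR (zcomponent_grow yD zC xD) // /comparable xz orbT.
Qed.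

Lemma zcomponent_admissible_out y : y \in R :&: S -> c y != 0 ->
  admissible (zcomponent (R :&: S) y) S c.
Proof.
move=> yD cy; have CD := zcomponent_sub yD.
have cC z : z \in zcomponent (R :&: S) y -> c z != 0.
  by move=> zC; rewrite (admissible_zcomponent yD zC).
move=> x z xz; split.
- by move=> xC _ zC _; apply: admissible_comparable; rewrite ?CD // /comparable xz.
- move=> xC xS zS /negP[]; have xD := CD _ xC.
  have zD : z \in R :&: S by rewrite inE zS (admissible_up xD (cC _ xC) zS xz).
  by rewrite (zcomponent_grow yD xC zD) // /comparable xz.
- by move=> /CD /setIP[_ ->].
Qed.

End Admissible.
End ConstantFactorization.

Section FullComponent.
Local Open Scope ring_scope.
Variables (m0 n : nat) (m : 'I_n -> nat) (F : fieldType).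
Notation P := (pt m0 m).
Variables (R S : {set P}) (c : P -> F).
Hypotheses (cvR : convex R) (cvS : convex S).
Hypotheses (adm : admissible R S c) (hNF : nonfactorizable R S c).
Notation D := (R :&: S).
Notation C := (zcomponent D).

(* Otherwise [c] would be the sum over the components of [c]'s support, each a spread. *)
Lemma exists_full_zcomponent :
  exists2 y, (y \in D) && (c y != 0) & C y = R \/ C y = S.
Proof.
pose Z := [set z in D | c z != 0].
have [y /andP[yZ yRS]|none] := pickP [pred y | (y \in Z) && ((C y == R) || (C y == S))].
  by exists y; [rewrite inE in yZ | case/orP: yRS => /eqP; [left | right]].
have nfull z : z \in Z -> C z != R /\ C z != S.
  by move=> zZ; have := none z; rewrite /= zZ => /norP.
pose s' := undup [seq C z | z <- enum Z].
have s'P k : (k < size s')%N -> exists2 z, z \in Z & nth set0 s' k = C z.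
  by move/(mem_nth set0); rewrite mem_undup => /mapP[z]; rewrite mem_enum; exists z.
exfalso; refine (@hNF s' (fun _ _ => 1) (fun _ => c) _ _) => [k /s'P[z zZ ->] | x xR xS].
  have [ne1 ne2] := nfull z zZ; move: zZ; rewrite inE => /andP[zD cz].
  split=> //; first exact: zcomponent_spread (convex_setI cvR cvS) zD.
    exact (zcomponent_admissible_in adm zD cz).
  exact (zcomponent_admissible_out adm zD cz).
have [c0|cx] := eqVneq (c x) 0; first by rewrite c0 big1 // => k _; rewrite mulr0.
have xZ : x \in Z by rewrite !inE xR xS cx.
have il : (index (C x) s' < size s')%N.
  by rewrite index_mem mem_undup; apply/mapP; exists x; rewrite ?mem_enum.
rewrite (bigD1 (Ordinal il)) /=; last by rewrite nth_index ?zcomponent_refl // -index_mem.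
rewrite big1 ?addr0 ?mul1r // => k /andP[xk kne]; case/eqP: kne.
have [z zZ ez] := s'P k (ltn_ord k).
apply/val_inj/eqP; rewrite /= -(nth_uniq set0 (ltn_ord k) il (undup_uniq _)) nth_index.
  by rewrite ez -(@zcomponent_eq _ _ _ D z x) // -ez.
by rewrite -index_mem.
Qed.

End FullComponent.

Section QSet.
Variables (m0 n : nat) (m : 'I_n -> nat).
Notation P := (pt m0 m).
Notation shift0 := (@shift0 m0 n m).
Implicit Types (a b c x z : P) (S X : {set P}).

Lemma Qset_fst_mem S x z :
  z \in pmin setT :|: pmin S :|: shift0 @: pmin S :|: shift0 @: pmax S
          :|: shift0 @: (shift0 @: pmax S) ->
  val z.1 = val x.1 -> x \in Qset S.
Proof. by move=> zX e; rewrite inE; apply/imsetP; exists z => //; apply/val_inj. Qed.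

Lemma Qset_fst S a x : a \in Qset S -> val a.1 = val x.1 -> x \in Qset S.
Proof. by rewrite !inE => h e; have -> : x.1 = a.1 by apply/val_inj. Qed.

Lemma Qset_bottom S x : val x.1 = 0 -> x \in Qset S.
Proof.
move=> x0; have [a am /ple_fst ax] := exists_pmin (in_setT x).
apply: (Qset_fst_mem (z := a)); first by rewrite !in_setU am.
by rewrite x0; apply/eqP; rewrite -leqn0 -x0.
Qed.

Lemma Qset_pmin S a x : a \in pmin S -> val a.1 = val x.1 -> x \in Qset S.
Proof. by move=> am; apply: Qset_fst_mem; rewrite !in_setU am !orbT. Qed.

Lemma Qset_pmin_succ S a x : a \in pmin S -> (val a.1).+1 = val x.1 -> x \in Qset S.
Proof.
move=> am e; apply: (Qset_fst_mem (z := shift0 a)); first by rewrite !in_setU (imset_f _ am) ?orbT.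
by rewrite /= succT_val e // ltn_ord.
Qed.

Lemma Qset_pmax_succ S b x : b \in pmax S -> (val b.1).+1 = val x.1 -> x \in Qset S.
Proof.
move=> bm e; apply: (Qset_fst_mem (z := shift0 b)); first by rewrite !in_setU (imset_f _ bm) ?orbT.
by rewrite /= succT_val e // ltn_ord.
Qed.

Lemma Qset_pmax_succ2 S b x : b \in pmax S -> (val b.1).+2 = val x.1 -> x \in Qset S.
Proof.
move=> bm e; apply: (Qset_fst_mem (z := shift0 (shift0 b))).
  by rewrite !in_setU (imset_f _ (imset_f _ bm)) ?orbT.
have b1 : ((val b.1).+1 < m0)%N by rewrite (leq_ltn_trans _ (ltn_ord x.1)) // -e.
by rewrite /= !succT_val //= e // ltn_ord.
Qed.

Lemma upsetP X y : reflect (exists2 x, x \in X & ple x y) (y \in upset X).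
Proof. by rewrite inE; apply: exists_inP. Qed.

Lemma pcover_cases X c : c \in pcover X ->
  [/\ c \notin X, exists2 x, x \in X & ple x c &
    (exists2 a, a \in pmin X & val a.1 = val c.1) \/ ((0 < c.1)%N /\ unshift0 c \in X)].
Proof.
case/pminP => /setDP[cu cX] cmin; split=> //; first exact/upsetP.
have [x xX xc] := upsetP _ _ cu; have [a am ax] := exists_pmin xX.
have ac := ple_trans ax xc; case: (ltngtP a.1 c.1) => h; last by left; exists a.
- right; split; first exact: leq_ltn_trans h.
  apply/negPn/negP => dX; have := unshift0_neq (leq_ltn_trans (leq0n _) h).
  rewrite (cmin (unshift0 c)) ?eqxx // ?unshift0_ple //.
  apply/setDP; split=> //; apply/upsetP; exists a; first exact: pmin_mem am.
  exact: ple_unshift0.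
- by have := ple_fst ac; rewrite leqNgt h.
Qed.

Lemma pcover_above_pmax X c : convex X -> (0 < c.1)%N -> unshift0 c \in X -> c \notin X ->
  (exists2 a, a \in X & ple a c) -> exists2 b, b \in pmax X & (val b.1).+1 = val c.1.
Proof.
move=> cvX c0 dX cX [a aX ac]; have [b bm db] := exists_pmax dX; exists b => //.
case: (leqP c.1 b.1) => h.
  by case/negP: cX; apply: (cvX a c b) => //; [exact: pmax_mem bm | exact: unshift0_ple_up].
by apply/eqP; rewrite /= eqn_leq h /= -(unshift0_succ c0) ltnS (ple_fst db).
Qed.

Lemma pcover_fst X c : convex X -> c \in pcover X ->
  (exists2 a, a \in pmin X & val a.1 = val c.1) \/
  (exists2 b, b \in pmax X & (val b.1).+1 = val c.1).
Proof.
move=> cvX cc; have [cX ex [h|[c0 dX]]] := pcover_cases cc; first by left.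
by right; apply: pcover_above_pmax.
Qed.

Lemma pmin_Qset S : pmin S \subset Qset S.
Proof. by apply/subsetP => x xm; apply: (Qset_pmin xm). Qed.

Lemma pcover_Qset S : convex S -> pcover S \subset Qset S.
Proof.
move=> cvS; apply/subsetP => c cc.
case: (pcover_fst cvS cc) => [[a am e]|[b bm e]].
  exact: Qset_pmin am e.
exact: Qset_pmax_succ bm e.
Qed.

End QSet.

Section SummandUpClosed.
Local Open Scope ring_scope.
Variables (m0 n : nat) (m : 'I_n -> nat) (F : fieldType).
Notation P := (pt m0 m).
Variables (R S : {set P}) (c : P -> F) (lam : F).
Hypotheses (sR : spread R) (sS : spread S) (hNF : nonfactorizable R S c).
Hypotheses (RS : R \subset S) (neRS : R != S) (upR : upclosed_in R S).
Hypothesis cR : forall z, z \in R -> c z = lam.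

(* A minimal [r] of [R] not level with [min S] has [q = r - e_0] in [S], and then [c] factors
   through [R :|: [set z in S | ple q z]] unless the latter is all of [S]. *)
Lemma upper_pmin_Qset : pmin R \subset Qset S.
Proof.
have [_ [cvS _]] := sS; have [_ [_ zzR]] := sR.
apply/subsetP => r /pminP[rR rmin].
have [a am ar] := exists_pmin (subsetP RS _ rR); have aS := pmin_mem am.
case: (ltngtP a.1 r.1) => h;
  [| by have := ple_fst ar; rewrite leqNgt h | exact: Qset_pmin am h].
have r0 : (0 < r.1)%N := leq_ltn_trans (leq0n _) h.
set q := unshift0 r.
have qS : q \in S := cvS _ _ _ aS (subsetP RS _ rR) (ple_unshift0 ar h) (unshift0_ple r).
have qR : q \notin R by apply/negP => /rmin/(_ (unshift0_ple r))/eqP; apply/negP/unshift0_neq.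
set R' := R :|: [set z in S | ple q z].
have RR' : R \subset R' := subsetUl _ _.
have R'S : R' \subset S by rewrite subUset RS; apply/subsetP => z; rewrite inE => /andP[].
have qR' : q \in R' by rewrite !inE qS ple_refl orbT.
have upR' : upclosed_in R' S.
  move=> x y; rewrite !inE => /orP[xR|/andP[_ qx]] yS xy; first by rewrite (upR xR yS xy).
  by rewrite yS (ple_trans qx xy) orbT.
have [eS|neS] := eqVneq R' S.
  apply: (Qset_pmin_succ (a := q)); last by rewrite unshift0_succ.
  apply/pminP; split=> // y; rewrite -eS !inE => /orP[yR|/andP[_ qy]] yq; last exact: ple_anti.
  by case/negP: qR; apply: (upR yR qS yq).
exfalso; apply: (nonfactorizable_const (R' := R') (lam := lam) hNF).
- split; first by apply/set0Pn; exists q.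
  split; last first.
    apply: (zigzag_connected_setU zzR rR qR') => [|y].
      by rewrite /comparable unshift0_ple orbT.
    by rewrite inE => /andP[_ qy]; rewrite /comparable qy.
  move=> x y z xR' zR' xy yz; have yS := cvS _ _ _ (subsetP R'S _ xR') (subsetP R'S _ zR') xy yz.
  exact: upR' xR' yS xy.
- by apply: contraNneq qR => <-.
- exact: neS.
- by rewrite (setIidPl RR') => x y xR /(subsetP R'S) yS xy; apply: upR xR yS xy.
- by rewrite (setIidPl RR'); apply: downclosed_in_refl.
- by rewrite (setIidPl R'S).
- by rewrite (setIidPl R'S); apply: downclosed_in_refl.
- by move=> x xR _; rewrite inE xR cR.
Qed.

Lemma upper_pcover_Qset : pcover R \subset Qset S.
Proof.
apply/subsetP => x xc; have [xR [y yR yx] [[a am e]|[x0 dR]]] := pcover_cases xc.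
  exact: Qset_fst (subsetP upper_pmin_Qset _ am) e.
have xS : x \notin S by apply: contra xR => xS; apply: upR yR xS yx.
have [_ [cvS _]] := sS.
have yS := subsetP RS _ yR.
have [b bm e] := pcover_above_pmax cvS x0 (subsetP RS _ dR) xS (ex_intro2 _ _ y yS yx).
exact: Qset_pmax_succ bm e.
Qed.

End SummandUpClosed.

Section TargetDownClosed.
Local Open Scope ring_scope.
Variables (m0 n : nat) (m : 'I_n -> nat) (F : fieldType).
Notation P := (pt m0 m).
Variables (R S : {set P}) (c : P -> F) (lam : F).
Hypotheses (sR : spread R) (sS : spread S) (hNF : nonfactorizable R S c).
Hypotheses (SR : S \subset R) (neRS : R != S) (dnS : downclosed_in S R).
Hypothesis cS : forall z, z \in S -> c z = lam.

Let cvR : convex R. Proof. by case: sR => _ []. Qed.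

(* Otherwise [c] factors through [S :|: [set z in R | ple z x0]]. *)
Lemma lower_below x0 s0 y : x0 \in R -> x0 \notin S -> s0 \in S -> ple s0 x0 ->
  y \in R -> y \notin S -> ple y x0.
Proof.
move=> x0R x0S s0S s0x yR yS.
set R' := S :|: [set z in R | ple z x0].
have R'R : R' \subset R by rewrite subUset SR; apply/subsetP => z; rewrite inE => /andP[].
have SR' : S \subset R' := subsetUl _ _.
have x0R' : x0 \in R' by rewrite !inE x0R ple_refl orbT.
have [eR|neR] := eqVneq R' R.
  by move: yR; rewrite -eR !inE (negPf yS) => /andP[].
have dnR' : downclosed_in R' R.
  move=> x y'; rewrite !inE => /orP[y'S|/andP[_ y'x]] xR xy; first by rewrite (dnS y'S xR xy).
  by rewrite xR (ple_trans xy y'x) orbT.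
exfalso; apply: (nonfactorizable_const (R' := R') (lam := lam) hNF).
- split; first by apply/set0Pn; exists x0.
  split; last first.
    have [_ [_ zzS]] := sS; apply: (zigzag_connected_setU zzS s0S x0R').
      by rewrite /comparable s0x.
    by move=> z; rewrite inE => /andP[_ zx]; rewrite /comparable zx orbT.
  move=> x y' z xR' zR' xy yz.
  exact (dnR' y' z zR' (cvR (subsetP R'R _ xR') (subsetP R'R _ zR') xy yz) yz).
- exact: neR.
- by apply: contraNneq x0S => <-.
- by rewrite (setIidPr R'R); apply: upclosed_in_refl.
- by rewrite (setIidPr R'R).
- by rewrite (setIidPr SR'); apply: upclosed_in_refl.
- by rewrite (setIidPr SR') => x y' y'S xR' xy; apply: dnS y'S (subsetP R'R _ xR') xy.
- by move=> x _ xS; rewrite inE xS cS.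
Qed.

Lemma lower_exists_top :
  exists x0, [/\ x0 \in R, x0 \notin S & exists2 s0, s0 \in S & ple s0 x0].
Proof.
have [/set0Pn[s1 s1S] _] := sS; have [_ [_ zzR]] := sR.
pose top x0 := [&& x0 \in R, x0 \notin S & [exists s0 in S, ple s0 x0]].
have [x0 /and3P[x0R x0S /exists_inP[s0 s0S s0x]]|none] := pickP top.
  by exists x0; split=> //; exists s0.
case/negP: neRS; rewrite eqEsubset SR andbT; apply/subsetP.
apply: (zigzag_connected_closed zzR s1S (subsetP SR)) => a b aS bR /orP[] ab.
  apply/negPn/negP => bS; have := none b; rewrite /top bR bS /=.
  by move/negbT/exists_inPn/(_ a aS); rewrite ab.
exact: dnS aS bR ab.
Qed.

Lemma lower_top_pcover x0 s0 : x0 \in R -> x0 \notin S -> s0 \in S -> ple s0 x0 ->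
  x0 \in pcover S.
Proof.
move=> x0R x0S s0S s0x; apply/pminP; split.
  by rewrite in_setD x0S; apply/upsetP; exists s0.
move=> y /setDP[/upsetP[s2 s2S s2y] yS] yx0.
have yR : y \in R := cvR (subsetP SR _ s2S) x0R s2y yx0.
exact: ple_anti yx0 (lower_below yR yS s2S s2y x0R x0S).
Qed.

(* [q = r - e_0] lies below [S]: otherwise [c] factors through [R] enlarged by the points
   between [q] and [R]. *)
Lemma lower_pmin_below r : r \in pmin R -> (0 < r.1)%N ->
  exists2 s2, s2 \in S & ple (unshift0 r) s2.
Proof.
case/pminP => rR rmin r0; set q := unshift0 r.
have [/exists_inP//|qS] := boolP [exists s2 in S, ple q s2].
have qnS s2 : s2 \in S -> ~~ ple q s2.
  by move=> s2S; apply: contra qS => qs2; apply/exists_inP; exists s2.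
have qR : q \notin R by apply/negP => /rmin/(_ (unshift0_ple r))/eqP; apply/negP/unshift0_neq.
set R' := R :|: [set z | ple q z && [exists w in R, ple z w]].
have RR' : R \subset R' := subsetUl _ _.
have SR' : S \subset R' := subset_trans SR RR'.
have qR' : q \in R'.
  rewrite !inE ple_refl; apply/orP; right.
  by apply/exists_inP; exists r => //; apply: unshift0_ple.
have hullR z : z \in R' -> exists2 w, w \in R & ple z w.
  case/setUP => [zR|]; first by exists z => //; apply: ple_refl.
  by rewrite inE => /andP[_ /exists_inP].
have upR : upclosed_in R R'.
  by move=> x y xR /hullR[w wR yw] xy; apply: cvR xR wR xy yw.
exfalso; apply: (nonfactorizable_const (R' := R') (lam := lam) hNF).
- split; first by apply/set0Pn; exists q.
  split; last first.
    have [_ [_ zzR]] := sR; apply: (zigzag_connected_setU zzR rR qR').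
      by rewrite /comparable unshift0_ple orbT.
    by move=> z; rewrite inE => /andP[qz _]; rewrite /comparable qz.
  move=> x y z xR' /hullR[w wR zw] xy yz.
  case/setUP: xR' => [xR|]; first by rewrite inE (cvR xR wR xy (ple_trans yz zw)).
  rewrite inE => /andP[qx _]; rewrite !inE (ple_trans qx xy) /=; apply/orP; right.
  by apply/exists_inP; exists w => //; apply: ple_trans yz zw.
- by apply: contraNneq qR => <-.
- by apply/eqP => eS; have := qnS q; rewrite -{1}eS qR' ple_refl => /(_ isT).
- by rewrite (setIidPl RR').
- by rewrite (setIidPl RR'); apply: downclosed_in_refl.
- by rewrite (setIidPr SR'); apply: upclosed_in_refl.
- rewrite (setIidPr SR') => x y yS; case/setUP => [xR xy|]; first exact: dnS yS xR xy.
  by rewrite inE => /andP[qx _] xy; case/negP: (qnS y yS); apply: ple_trans qx xy.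
- by move=> x xR xS; rewrite inE xR cS.
Qed.

Lemma lower_pmin_Qset : pmin R \subset Qset S.
Proof.
apply/subsetP => r rm; have [rR rmin] := pminP _ _ rm.
have [rS|rS] := boolP (r \in S).
  apply: (Qset_pmin (a := r)) => //; apply/pminP; split=> // y yS yr.
  exact: rmin y (subsetP SR _ yS) yr.
have [r0|r0] := posnP r.1; first exact: Qset_bottom.
have [s2 s2S qs2] := lower_pmin_below rm r0.
have [b bm s2b] := exists_pmax s2S; have qb := ple_trans qs2 s2b.
apply: (Qset_pmax_succ bm); case: (leqP r.1 b.1) => h.
  by case/negP: rS; apply: dnS (pmax_mem bm) rR (unshift0_ple_up qb h).
by apply/eqP; rewrite /= eqn_leq h -(unshift0_succ r0) ltnS (ple_fst qb).
Qed.

Lemma lower_pcover_Qset : pcover R \subset Qset S.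
Proof.
apply/subsetP => x xc; have [xR [y yR yx] [[a am e]|[x0 dR]]] := pcover_cases xc.
  exact: Qset_fst (subsetP lower_pmin_Qset _ am) e.
have [w wm e] := pcover_above_pmax cvR x0 dR xR (ex_intro2 _ _ y yR yx).
have [wR wmax] := pmaxP _ _ wm.
have [wS|wS] := boolP (w \in S).
  apply: (Qset_pmax_succ (b := w)) e; apply/pmaxP; split=> // z zS wz.
  exact: wmax z (subsetP SR _ zS) wz.
have [t [tR tS [s0 s0S s0t]]] := lower_exists_top.
have wt : w = t by apply/esym/(wmax t tR)/(lower_below tR tS s0S s0t wR wS).
have [_ [cvS _]] := sS; rewrite wt in e.
case: (pcover_fst cvS (lower_top_pcover tR tS s0S s0t)) => [[a am ea]|[b bm eb]].
  by apply: (Qset_pmin_succ am); rewrite ea.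
by apply: (Qset_pmax_succ2 bm); rewrite eb.
Qed.

End TargetDownClosed.

Section Summands.
Local Open Scope ring_scope.
Variables (m0 n : nat) (m : 'I_n -> nat) (F : fieldType).
Notation P := (pt m0 m).

Lemma nonfactorizable_Qset (R S : {set P}) (c : P -> F) : spread R -> spread S ->
  admissible R S c -> nonfactorizable R S c -> (R = S -> exists2 x, x \in S & c x = 0) ->
  pmin R \subset Qset S /\ pcover R \subset Qset S.
Proof.
move=> sR sS adm hNF hRS; have [_ [cvS _]] := sS; have [_ [cvR _]] := sR.
have [y /andP[yD cy] full] := exists_full_zcomponent cvR cvS adm hNF.
have cC z : z \in zcomponent (R :&: S) y -> c z = c y := admissible_zcomponent adm yD.
have neRS : R != S.
  apply/eqP => eRS; have [x xS cx0] := hRS eRS.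
  have xC : x \in zcomponent (R :&: S) y by case: full => ->; rewrite ?eRS.
  by move: cy; rewrite -(cC x xC) cx0 eqxx.
have CD := zcomponent_sub yD.
case: full => eC.
  have RS : R \subset S by apply/subsetP => z; rewrite -eC => /CD /setIP[].
  have cR z : z \in R -> c z = c y by rewrite -eC; apply: cC.
  have upR : upclosed_in R S.
    move=> x z xR zS; apply: (admissible_up adm) zS; first by rewrite inE xR (subsetP RS).
    by rewrite cR.
  by split; [apply: upper_pmin_Qset cR | apply: upper_pcover_Qset cR].
have SR : S \subset R by apply/subsetP => z; rewrite -eC => /CD /setIP[].
have cS z : z \in S -> c z = c y by rewrite -eC; apply: cC.
have dnS : downclosed_in S R.
  move=> x z zS xR; apply: (admissible_down adm) xR; first by rewrite inE zS (subsetP SR).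
  by rewrite cS.
by split; [apply: lower_pmin_Qset cS | apply: lower_pcover_Qset cS].
Qed.

End Summands.

Theorem mainTheorem16 (F : fieldType) (m0 n : nat) (m : 'I_n -> nat)
  (S : {set pt m0 m}) :
  spread S ->
  [/\ pmin S \subset Qset S,
      pcover S \subset Qset S &
      forall (s : seq {set pt m0 m}) (rho : rhom (dsum F s) (dsum F [:: S])),
        min_spread_rad_approx rho ->
        forall R : {set pt m0 m}, spread R ->
          direct_summand (spread_rep F R) (dsum F s) ->
          pmin R \subset Qset S /\ pcover R \subset Qset S].
Proof.
move=> sS; split; [exact: pmin_Qset | by case: sS => _ [] /pcover_Qset |].
move=> s rho hrho R sR hsum; have [sp hr _ _] := hrho.
have [j <-] := direct_summand_mem sR sp hsum.
apply: (nonfactorizable_Qset (sp _ (mem_nth set0 (ltn_ord j))) sS).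
- exact: coef_admissible (component_hom j hr).
- exact: component_nonfactorizable.
- exact: component_self_vanishes.
Qed.
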